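(* Let $\mathcal A$ be a Banach algebra and $I$ a closed two-sided ideal of $\mathcal A$ with a bounded approximate identity. If $I$ and $\mathcal A/I$ are ideally amenable, then $\mathcal A$ is ideally amenable.
   Context: A Banach algebra $\mathcal B$ is ideally amenable if for every closed two-sided ideal $K$ of $\mathcal B$, every derivation $D:\mathcal B\to K^*$ (continuous linear map with $D(ab)=a\cdot D(b)+D(a)\cdot b$, where $K^*$ carries the actions $\langle x,a\cdot f\rangle=\langle xa,f\rangle$, $\langle x,f\cdot a\rangle=\langle ax,f\rangle$) is inner, i.e. $D(a)=a\cdot f-f\cdot a$ for some $f\in K^*$. *)

From mathcomp Require Import all_boot all_algebra.
From mathcomp Require Import all_classical all_reals all_analysis.
From mathcomp Require Export complex.
Export GRing.Theory Num.Theory.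

Set Implicit Arguments.
Unset Strict Implicit.
Unset Printing Implicit Defensive.

Local Open Scope ring_scope.
Local Open Scope classical_set_scope.

Section BanachAlgebra.
Variables (R : realType) (V : completeNormedModType R[i]).

Definition is_banach_algebra (mul : V -> V -> V) : Prop :=
  [/\ (forall a b c, mul a (mul b c) = mul (mul a b) c),
      (forall (k : R[i]) a b c, mul (k *: a + b) c = k *: mul a c + mul b c),
      (forall (k : R[i]) a b c, mul a (k *: b + c) = k *: mul a b + mul a c) &
      (forall a b, `|mul a b| <= `|a| * `|b|)].

Definition subspace (S : set V) : Prop :=
  S 0 /\ forall (k : R[i]) x y, S x -> S y -> S (k *: x + y).

Definition closed_ideal_in (mul : V -> V -> V) (S K : set V) : Prop :=
  [/\ K `<=` S, subspace K, closed K &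
      forall a x, S a -> K x -> K (mul a x) /\ K (mul x a)].

Definition closed_ideal (mul : V -> V -> V) (I : set V) : Prop :=
  closed_ideal_in mul setT I.

(* f represents an element of K^* : linear and bounded on K
   (values of f outside K are irrelevant). *)
Definition dual_elt (K : set V) (f : V -> R[i]) : Prop :=
  (forall (k : R[i]) x y, K x -> K y -> f (k *: x + y) = k * f x + f y) /\
  exists C : R[i], forall x, K x -> `|f x| <= C * `|x|.

(* D represents a continuous derivation from the algebra S into K^*,
   where  <x, D a> = D a x,  <x, a.f> = <xa, f>,  <x, f.a> = <ax, f>. *)
Definition derivation_into_dual (mul : V -> V -> V) (S K : set V)
    (D : V -> V -> R[i]) : Prop :=
  [/\ (forall a, S a -> dual_elt K (D a)),
      (forall (k : R[i]) a b x, S a -> S b -> K x ->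
          D (k *: a + b) x = k * D a x + D b x),
      (exists C : R[i], forall a x, S a -> K x -> `|D a x| <= C * `|a| * `|x|) &
      (forall a b x, S a -> S b -> K x ->
          D (mul a b) x = D b (mul x a) + D a (mul b x))].

(* D is inner: D a = a.f - f.a for some f in K^* *)
Definition inner_derivation (mul : V -> V -> V) (S K : set V)
    (D : V -> V -> R[i]) : Prop :=
  exists f, dual_elt K f /\
    forall a x, S a -> K x -> D a x = f (mul x a) - f (mul a x).

Definition ideally_amenable_on (mul : V -> V -> V) (S : set V) : Prop :=
  forall K, closed_ideal_in mul S K ->
  forall D, derivation_into_dual mul S K D -> inner_derivation mul S K D.

Definition ideally_amenable (mul : V -> V -> V) : Prop :=
  ideally_amenable_on mul setT.

Definition has_bai (mul : V -> V -> V) (I : set V) : Prop :=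
  exists (L : Type) (le : L -> L -> Prop) (e : L -> V),
  [/\ inhabited L /\ (forall l, le l l),
      (forall l1 l2 l3, le l1 l2 -> le l2 l3 -> le l1 l3) /\
      (forall l1 l2, exists l3, le l1 l3 /\ le l2 l3),
      (forall l, I (e l)),
      (exists M : R[i], forall l, `|e l| <= M) &
      (forall x, I x -> forall eps : R[i], 0 < eps -> exists l0, forall l,
          le l0 l -> `|mul (e l) x - x| < eps /\ `|mul x (e l) - x| < eps)].

End BanachAlgebra.

Section Quotient.
Variables (R : realType) (V W : completeNormedModType R[i]).

(* (W, mulW) together with q is (an isometric copy of) the quotient Banach
   algebra V / I : q is a surjective algebra homomorphism with kernel I and
   ||q a|| = inf { ||a + y|| : y in I } (quotient norm). *)
Definition is_quotient_algebra (mulV : V -> V -> V) (I : set V)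
    (mulW : W -> W -> W) (q : V -> W) : Prop :=
  [/\ (forall (k : R[i]) a b, q (k *: a + b) = k *: q a + q b),
      (forall a b, q (mulV a b) = mulW (q a) (q b)),
      (forall w, exists a, q a = w),
      (forall a, q a = 0 <-> I a) &
      (forall a, (forall y, I y -> `|q a| <= `|a + y|) /\
         (forall eps : R[i], 0 < eps -> exists y, I y /\ `|a + y| < `|q a| + eps))].

End Quotient.

From mathcomp Require Import all_boot all_algebra.
From mathcomp Require Import all_classical all_reals all_analysis.
From mathcomp Require Import complex ring lra.
Import GRing.Theory Num.Theory order.Order.TTheory.

(* Let D : A -> K^* be a derivation.  Restricted to I it is a derivation into
   the dual of the closed ideal K ∩ I of I, hence inner, implemented by some f;
   extend f to g in A^* by the Hahn-Banach theorem.  With a bounded approximate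
   identity (e_l) of I, the derivation D' = D - ad g vanishes on I × K (because
   D' (e_l a) x = 0) and then on A × (K ∩ I) (because D' a (e_l x) = 0).  So D'
   induces a derivation of A / I into the dual of q K, which is a closed ideal
   since every element of q K lifts to K with controlled norm (take x - e_l x).
   It is inner, implemented by some h, and D = ad (g + h ∘ q). *)

Set Implicit Arguments.
Unset Strict Implicit.
Local Open Scope ring_scope.
Local Open Scope classical_set_scope.
Local Open Scope complex_scope.

(** * The Hahn-Banach theorem *)

Section RealHahnBanach.
Variables (R : realType) (V : lmodType R[i]) (p : V -> R).
Hypothesis pD : forall x y, p (x + y) <= p x + p y.
Hypothesis pZ : forall (t : R) x, 0 <= t -> p (t%:C *: x) = t * p x.

Definition dominated_graph (G : set (V * R)) :=
  [/\ G (0, 0),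
      forall (t : R) x r y s, G (x, r) -> G (y, s) -> G (t%:C *: x + y, t * r + s),
      forall x r s, G (x, r) -> G (x, s) -> r = s &
      forall x r, G (x, r) -> r <= p x].

Lemma scale_realV (t : R) (x y : V) : t != 0 ->
  t%:C *: ((t^-1)%:C *: x + y) = x + t%:C *: y.
Proof. by move=> t0; rewrite scalerDr scalerA -rmorphM mulfV // scale1r. Qed.

Section OneStepExtension.
Variables (G : set (V * R)) (z : V).
Hypotheses (domG : dominated_graph G) (Gz : ~ exists r, G (z, r)).

Let lower := [set v | exists y s, G (y, s) /\ v = s - p (y - z)].

(* The value [c] given to [z] must satisfy [s - p (y - z) <= c <= p (y + z) - s]
   for all [(y, s)] in [G]; such a [c] exists by subadditivity of [p]. *)
Let c := sup lower.

Let lower_le_upper y s y' s' : G (y, s) -> G (y', s') ->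
  s - p (y - z) <= p (y' + z) - s'.
Proof.
case: domG => _ Glin _ Gp Gy Gy'.
have := Gp _ _ (Glin 1 _ _ _ _ Gy Gy'); rewrite scale1r mul1r => le_p.
have : p (y + y') <= p (y - z) + p (y' + z).
  have -> : y + y' = (y - z) + (y' + z) by rewrite addrA addrAC subrK.
  exact: pD.
lra.
Qed.

Let has_sup_lower : has_sup lower.
Proof.
case: domG => G00 _ _ _; split; first by exists (0 - p (0 - z)), 0, 0.
by exists (p (0 + z) - 0) => v [y [s [Gy ->]]]; exact: lower_le_upper Gy G00.
Qed.

Let lower_le_c y s : G (y, s) -> s - p (y - z) <= c.
Proof. by move=> Gy; apply: sup_upper_bound has_sup_lower _ _; exists y, s. Qed.

Let c_le_upper y s : G (y, s) -> c <= p (y + z) - s.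
Proof.
move=> Gy; apply: ge_sup; first by case: has_sup_lower.
by move=> v [y' [s' [Gy' ->]]]; exact: lower_le_upper Gy' Gy.
Qed.

Definition graph_extension : set (V * R) :=
  [set xr | exists x r (t : R), G (x, r) /\ xr = (x + t%:C *: z, r + t * c)].

Lemma graph_extension_functional x r s :
  graph_extension (x, r) -> graph_extension (x, s) -> r = s.
Proof.
case: domG => G00 Glin Gfun _.
move=> [x1 [r1 [t1 [G1 [-> ->]]]]] [x2 [r2 [t2 [G2 []]]]] x12 ->.
have [t12|t12] := eqVneq t1 t2; first subst t2.
  by move/addIr: x12 G2 => <- /(Gfun _ _ _ G1) ->.
exfalso; apply: Gz; exists ((t2 - t1)^-1 * (-1 * r2 + r1) + 0).
have x21 : (-1)%:C *: x2 + x1 = (t2 - t1)%:C *: z.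
  rewrite rmorphN1 scaleN1r rmorphB scalerBl -[x1](addrK (t1%:C *: z)) x12.
  by rewrite addrA addKr.
have -> : z = ((t2 - t1)^-1)%:C *: ((-1)%:C *: x2 + x1) + 0.
  by rewrite x21 addr0 scalerA -rmorphM mulVf ?subr_eq0 1?eq_sym // scale1r.
by apply: (Glin _ _ _ _ _ _ G00); apply: Glin.
Qed.

Lemma graph_extension_dominated x r : graph_extension (x, r) -> r <= p x.
Proof.
case: domG => G00 Glin _ Gp [y [s [t [Gy [-> ->]]]]].
have Gty t' : G ((t'^-1)%:C *: y, t'^-1 * s).
  by rewrite -[_ *: y]addr0 -[_ * s]addr0; exact: Glin.
case: (ltgtP t 0) => [t_lt0|t_gt0|->].
- have nt_gt0 : 0 < - t by rewrite oppr_gt0.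
  have := lower_le_c (Gty (- t)); rewrite -(ler_pM2l nt_gt0) mulrBr mulrA.
  rewrite mulfV ?gt_eqF // mul1r -(pZ _ (ltW nt_gt0)) scale_realV ?gt_eqF //.
  by rewrite scalerN rmorphN scaleNr opprK; lra.
- have := c_le_upper (Gty t); rewrite -(ler_pM2l t_gt0) mulrBr mulrA.
  by rewrite mulfV ?gt_eqF // mul1r -(pZ _ (ltW t_gt0)) scale_realV ?gt_eqF //; lra.
- by rewrite scale0r mul0r !addr0; exact: Gp.
Qed.

Lemma dominated_graph_extension : dominated_graph graph_extension.
Proof.
case: domG => G00 Glin _ _; split.
- by exists 0, 0, 0; rewrite scale0r mul0r !addr0.
- move=> k _ _ _ _ [x1 [r1 [t1 [G1 [-> ->]]]]] [x2 [r2 [t2 [G2 [-> ->]]]]].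
  exists (k%:C *: x1 + x2), (k * r1 + r2), (k * t1 + t2); split; first exact: Glin.
  congr pair; last by ring.
  by rewrite rmorphD rmorphM scalerDr scalerDl scalerA addrACA.
- exact: graph_extension_functional.
- exact: graph_extension_dominated.
Qed.

Lemma graph_extension_proper : G `<` graph_extension.
Proof.
split=> [[x r] Gx|sub]; first by exists x, r, 0; rewrite scale0r mul0r !addr0.
apply: Gz; exists c; apply: sub; exists 0, 0, 1.
by case: domG => G00 _ _ _; rewrite scale1r !add0r mul1r.
Qed.

End OneStepExtension.

Variables (L : set V) (u : V -> R).
Hypothesis L0 : L 0.
Hypothesis Llin : forall (t : R) x y, L x -> L y -> L (t%:C *: x + y).
Hypothesis ulin : forall (t : R) x y, L x -> L y -> u (t%:C *: x + y) = t * u x + u y.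
Hypothesis u_le_p : forall x, L x -> u x <= p x.

Let graph_u : set (V * R) := [set xr | L xr.1 /\ xr.2 = u xr.1].

Let u0 : u 0 = 0.
Proof. by have := ulin (-1) L0 L0; rewrite scaler0 addr0 mulN1r addNr. Qed.

Let dominated_graph_u : dominated_graph graph_u.
Proof.
split=> [|t x _ y _ [/= Lx ->] [/= Ly ->]|x r s [_ /= ->] [_ /= ->]//|x r [/= Lx ->]].
- by split=> //=; rewrite u0.
- by split=> /=; [exact: Llin | rewrite ulin].
- exact: u_le_p.
Qed.

(* Zorn's lemma is applied to the sets [X] such that [graph_u `|` X] is
   dominated, which makes the empty chain harmless. *)
Let extends_u (X : set (V * R)) := dominated_graph (graph_u `|` X).

Let extends_u_bigcup (F : set (set (V * R))) : F `<=` extends_u ->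
  total_on F subset -> extends_u (\bigcup_(X in F) X).
Proof.
move=> Fu totF; set U := \bigcup_(X in F) X.
have common w1 w2 : (graph_u `|` U) w1 -> (graph_u `|` U) w2 ->
    exists2 X, extends_u X & [/\ (graph_u `|` X) w1, (graph_u `|` X) w2 & X `<=` U].
  have sub X : F X -> X `<=` U by move=> FX w Xw; exists X.
  move=> [u1|[X FX Xw1]] [u2|[Y FY Yw2]].
  - by exists set0; [rewrite /extends_u setU0 | split; [left | left | exact: sub0set]].
  - by exists Y; [exact: Fu | split; [left | right | exact: sub]].
  - by exists X; [exact: Fu | split; [right | left | exact: sub]].
  - have [XY|YX] := totF X Y FX FY.
    + by exists Y; [exact: Fu | split; [right; exact: XY | right | exact: sub]].
    + by exists X; [exact: Fu | split; [right | right; exact: YX | exact: sub]].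
have lift X w : X `<=` U -> (graph_u `|` X) w -> (graph_u `|` U) w.
  by move=> XU [?|/XU ?]; [left | right].
split.
- by case: dominated_graph_u => G00 _ _ _; left.
- move=> t x r y s h1 h2; have [X [_ GX _ _] [X1 X2 XU]] := common _ _ h1 h2.
  exact: (lift _ _ XU (GX _ _ _ _ _ X1 X2)).
- move=> x r s h1 h2; have [X [_ _ GX _] [X1 X2 _]] := common _ _ h1 h2.
  exact: GX X1 X2.
- move=> x r h; have [X [_ _ _ GX] [X1 _ _]] := common _ _ h h; exact: GX X1.
Qed.

Theorem real_hahn_banach : exists U : V -> R,
  [/\ forall (t : R) x y, U (t%:C *: x + y) = t * U x + U y,
      forall x, U x <= p x & forall x, L x -> U x = u x].
Proof.
have [X [domX maxX]] := Zorn_bigcup extends_u_bigcup.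
set G := graph_u `|` X.
have total z : exists r, G (z, r).
  apply: contrapT => Gz; have [sub nsub] := graph_extension_proper domX Gz.
  apply: (maxX (graph_extension G z)).
    split=> [w Xw|XG]; first by apply: sub; right.
    by apply: nsub => w /XG Xw; right.
  rewrite /extends_u setUidr; first exact: dominated_graph_extension domX Gz.
  by move=> w uw; apply: sub; left.
case: domX => _ Glin Gfun Gp.
pose U x := xget 0 [set r | G (x, r)].
have GU x : G (x, U x) by exact: xgetPex (total x).
exists U; split.
- by move=> t x y; apply: (Gfun _ _ _ (GU _)); exact: Glin (GU x) (GU y).
- by move=> x; exact: Gp (GU x).
- by move=> x Lx; apply: (Gfun _ _ _ (GU _)); left.
Qed.

End RealHahnBanach.

Section ComplexHahnBanach.
Variables (R : realType) (V : normedModType R[i]).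
Implicit Types (x y : V) (t : R) (w : R[i]).

Lemma ReD w1 w2 : complex.Re (w1 + w2) = complex.Re w1 + complex.Re w2.
Proof. by case: w1 => ? ?; case: w2. Qed.

Lemma ReMrC t w : complex.Re (t%:C * w) = t * complex.Re w.
Proof. by case: w => a b /=; rewrite mul0r subr0. Qed.

Lemma Re_le w1 w2 : w1 <= w2 -> complex.Re w1 <= complex.Re w2.
Proof. by rewrite lecE => /andP[]. Qed.

Lemma Re_le_norm w : complex.Re w <= complex.Re `|w|.
Proof. by apply: le_trans (ler_norm _) _; exact: Re_le (normc_ge_Re w). Qed.

Definition complexify (U : V -> R) x : R[i] := (U x)%:C - 'i * (U ('i *: x))%:C.

Section Complexify.
Variable U : V -> R.
Hypothesis Ulin : forall t x y, U (t%:C *: x + y) = t * U x + U y.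

Let U0 : U 0 = 0.
Proof. by have := Ulin (-1) 0 0; rewrite scaler0 addr0 mulN1r addNr. Qed.

Let UD x y : U (x + y) = U x + U y.
Proof. by have := Ulin 1 x y; rewrite scale1r mul1r. Qed.

Let UZ t x : U (t%:C *: x) = t * U x.
Proof. by have := Ulin t x 0; rewrite !addr0 U0 addr0. Qed.

Lemma Re_complexify x : complex.Re (complexify U x) = U x.
Proof. by rewrite /complexify ReD /= !mul0r mul1r subr0 oppr0 addr0. Qed.

Lemma complexify_scalar : scalar (complexify U).
Proof.
have gD x y : complexify U (x + y) = complexify U x + complexify U y.
  by rewrite /complexify scalerDr !UD !rmorphD /=; ring.
have gZ t x : complexify U (t%:C *: x) = t%:C * complexify U x.
  rewrite /complexify (scalerA 'i) [_ * t%:C]mulrC -scalerA.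
  by rewrite !UZ !rmorphM /=; ring.
have gi x : complexify U ('i *: x) = 'i * complexify U x.
  have ii : 'i * 'i = -1 :> R[i] by rewrite -expr2 sqr_i.
  rewrite /complexify scalerA ii -(rmorphN1 (real_complex R)) UZ rmorphM /=.
  by rewrite rmorphN1 mulrBr !mulrA ii; ring.
move=> k x y; rewrite gD; congr (_ + _).
rewrite {1}[k]complexE scalerDl ['i * _]mulrC -scalerA gD !gZ gi.
by rewrite [X in _ = X * _]complexE mulrDl mulrCA mulrA.
Qed.

End Complexify.

Lemma norm_le_of_Re_le (g : V -> R[i]) c :
  scalar g -> 0 <= c -> (forall x, complex.Re (g x) <= complex.Re (c * `|x|)) ->
  forall x, `|g x| <= c * `|x|.
Proof.
move=> glin c0 Reg x; have [gx0|gx_neq0] := eqVneq (g x) 0.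
  by rewrite gx0 normr0 mulr_ge0.
(* rotate [x] so that [g] takes the real value [`|g x|] on it *)
pose lam := (g x)^-1 * `|g x|.
have glam : g (lam *: x) = `|g x|.
  have g0 : g 0 = 0 by rewrite -(subrr 0) (zmod_morphism_linear glin) subrr.
  by rewrite -[_ *: x]addr0 glin g0 addr0 mulrAC mulVf // mul1r.
have nlam : `|lam| = 1.
  by rewrite normrM normrV ?unitfE // normr_id mulVf ?normr_eq0.
have := Reg (lam *: x); rewrite glam normrZ nlam mul1r.
by rewrite -lecR !RRe_real ?ger0_real ?mulr_ge0.
Qed.

Theorem hahn_banach (L : set V) (f : V -> R[i]) c :
  L 0 -> (forall k x y, L x -> L y -> L (k *: x + y)) ->
  (forall k x y, L x -> L y -> f (k *: x + y) = k * f x + f y) ->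
  0 <= c -> (forall x, L x -> `|f x| <= c * `|x|) ->
  exists g : V -> R[i],
    [/\ scalar g, forall x, `|g x| <= c * `|x| & forall x, L x -> g x = f x].
Proof.
move=> L0 Llin flin c0 fc.
pose p x := complex.Re (c * `|x|).
have pD x y : p (x + y) <= p x + p y.
  by rewrite /p -ReD -mulrDr Re_le // ler_wpM2l // ler_normD.
have pZ t x : 0 <= t -> p (t%:C *: x) = t * p x.
  by move=> t0; rewrite /p normrZ ger0_norm ?ler0c // mulrCA ReMrC.
have Re_f_lin t x y : L x -> L y ->
    complex.Re (f (t%:C *: x + y)) = t * complex.Re (f x) + complex.Re (f y).
  by move=> Lx Ly; rewrite flin // ReD ReMrC.
have Re_f_le_p x : L x -> complex.Re (f x) <= p x.
  by move=> Lx; apply: le_trans (Re_le_norm _) _; exact: Re_le (fc x Lx).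
have [U [Ulin Up Uf]] :=
  real_hahn_banach pD pZ L0 (fun t => Llin t%:C) Re_f_lin Re_f_le_p.
exists (complexify U); split.
- exact: complexify_scalar.
- apply: norm_le_of_Re_le => // [|x]; first exact: complexify_scalar.
  by rewrite Re_complexify; exact: Up.
- move=> x Lx; have f0 : f 0 = 0.
    by have := flin (-1) 0 0 L0 L0; rewrite scaler0 addr0 mulN1r addNr.
  have fi : f ('i *: x) = 'i * f x by rewrite -[_ *: x]addr0 flin // f0 addr0.
  have Li : L ('i *: x) by rewrite -[_ *: x]addr0; exact: Llin.
  by rewrite /complexify !Uf // fi ['i * f x]mulrC ReiNIm rmorphN mulrN opprK -complexE.
Qed.

End ComplexHahnBanach.

Lemma eq0_of_norm_le_eps (K : numFieldType) (V : normedZmodType K) (z : V) (k : K) :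
  0 <= k -> (forall eps, 0 < eps -> `|z| <= k * eps) -> z = 0.
Proof.
move=> k0 zk; apply/normr0_eq0/le_anti; rewrite normr_ge0 andbT.
apply/ler_addgt0Pr => e e0; rewrite add0r.
have k1 : 0 < k + 1 by rewrite ltr_wpDl.
apply: le_trans (zk _ (divr_gt0 e0 k1)) _.
by rewrite mulrCA ger_pMr // ler_pdivrMr // mul1r lerDl.
Qed.

Lemma norm_le_abs (F : numFieldType) (V : normedZmodType F) (C : F) (x : V) (b : F) :
  0 <= b -> `|x| <= C * b -> `|x| <= `|C| * b.
Proof.
move=> b0 le_xb; have Cb : 0 <= C * b := le_trans (normr_ge0 x) le_xb.
by rewrite -[X in _ * X](ger0_norm b0) -normrM ger0_norm.
Qed.

Section HalfPowers.
Variable R : realType.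

Lemma halfpow_gt0 n : 0 < (2^-1 : R[i]) ^+ n.
Proof. by rewrite exprn_gt0 // invr_gt0 ltr0n. Qed.

Lemma halfpowS n : (2^-1 : R[i]) ^+ n.+1 = (2^-1) ^+ n / 2.
Proof. by rewrite exprSr. Qed.

Lemma halfpow_small (e : R[i]) : 0 < e ->
  exists N, forall n, (N <= n)%N -> (2^-1 : R[i]) ^+ n < e.
Proof.
move=> e0; have e_real : (complex.Re e)%:C = e by rewrite RRe_real ?gtr0_real.
have half_lt1 : `|2^-1 : R| < 1 by rewrite ger0_norm // invf_lt1 // ltr1n.
have [|N _ smallN] := (cvgrPdist_lt _ _).1 (cvg_expr half_lt1) (complex.Re e).
  by rewrite -ltcR e_real.
exists N => n /smallN; rewrite /= sub0r normrN ger0_norm ?exprn_ge0 //.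
by rewrite -ltcR e_real rmorphXn fmorphV rmorph_nat.
Qed.

Lemma cvg_halfpow_steps (V : completeNormedModType R[i]) (z : nat -> V) (C : R[i]) :
  0 <= C -> (forall n, `|z n.+1 - z n| <= C * (2^-1) ^+ n) -> cvg (z @ \oo).
Proof.
move=> C0 zC; pose r n := (2^-1 : R[i]) ^+ n.
have steps N j : `|z (j + N)%N - z N| <= 2 * C * (r N - r (j + N)%N).
  elim: j => [|j IH]; first by rewrite add0n !subrr normr0 mulr0.
  rewrite addSn -[z _](subrK (z (j + N)%N)) -addrA.
  apply: le_trans (ler_normD _ _) _; apply: le_trans (lerD (zC _) IH) _.
  by rewrite /r halfpowS le_eqVlt; apply/orP; left; apply/eqP; field.
apply/cauchy_cvgP/cauchy_exP => e e0.
have e'0 : 0 < e / (2 * C + 1) by rewrite divr_gt0 // ltr_wpDl ?mulr_ge0.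
have [N smallN] := halfpow_small e'0.
exists (z N), N => // n /= /subnK <-; rewrite -ball_normE /= distrC.
apply: le_lt_trans (steps _ _) _.
have := smallN N (leqnn N); rewrite -/(r N) ltr_pdivlMr ?ltr_wpDl ?mulr_ge0 //.
apply: le_lt_trans; apply: (@le_trans _ _ (2 * C * r N)).
  by rewrite ler_wpM2l ?mulr_ge0 // gerBl ltW ?halfpow_gt0.
by rewrite [_ * r N]mulrC ler_wpM2l ?lerDl // ltW ?halfpow_gt0.
Qed.

End HalfPowers.

Section Subspaces.
Variables (R : realType) (A : completeNormedModType R[i]).
Implicit Types (K I : set A) (x y : A) (k : R[i]) (f g : A -> R[i]).

Lemma subspaceD K x y : subspace K -> K x -> K y -> K (x + y).
Proof. by move=> sK Kx Ky; have := sK.2 1 _ _ Kx Ky; rewrite scale1r. Qed.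

Lemma subspaceB K x y : subspace K -> K x -> K y -> K (x - y).
Proof. by move=> sK Kx Ky; rewrite -scaleN1r addrC; apply: sK.2. Qed.

Lemma subspaceI K I : subspace K -> subspace I -> subspace (K `&` I).
Proof.
move=> [K0 Klin] [I0 Ilin]; split=> // k x y [Kx Ix] [Ky Iy].
by split; [exact: Klin | exact: Ilin].
Qed.

Lemma dual_eltB K f x y : dual_elt K f -> K x -> K y -> f (x - y) = f x - f y.
Proof. by move=> [flin _] Kx Ky; rewrite -scaleN1r addrC flin // mulN1r addrC. Qed.

Lemma dual_elt_bound K f : dual_elt K f ->
  exists2 C, 0 <= C & forall x, K x -> `|f x| <= C * `|x|.
Proof.
move=> [_ [C fC]]; exists `|C| => [|x Kx]; first exact: normr_ge0.
by apply: norm_le_abs; [exact: normr_ge0 | exact: fC].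
Qed.

Lemma dual_eltS K K' f : K' `<=` K -> dual_elt K f -> dual_elt K' f.
Proof.
move=> K'K [flin [C fC]]; split=> [k x y /K'K Kx /K'K Ky|]; first exact: flin.
by exists C => x /K'K; exact: fC.
Qed.

Lemma dual_eltD K f g : dual_elt K f -> dual_elt K g ->
  dual_elt K (fun x => f x + g x).
Proof.
move=> fK gK; have [Cf Cf0 fC] := dual_elt_bound fK.
have [Cg Cg0 gC] := dual_elt_bound gK.
split=> [k x y Kx Ky|]; first by rewrite fK.1 // gK.1 //; ring.
exists (Cf + Cg) => x Kx; rewrite mulrDl.
by apply: le_trans (ler_normD _ _) _; apply: lerD; [exact: fC | exact: gC].
Qed.

Lemma dual_elt_extension L f : subspace L -> dual_elt L f ->
  exists g, dual_elt setT g /\ forall x, L x -> g x = f x.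
Proof.
move=> [L0 Llin] fL; have [C C0 fC] := dual_elt_bound fL.
have [g [glin gC gf]] := hahn_banach L0 Llin fL.1 C0 fC.
by exists g; split=> //; split=> [k x y _ _|]; [exact: glin | exists C].
Qed.

End Subspaces.

Definition has_bounded_lifts (F : numDomainType) (A Q : normedZmodType F)
    (q : A -> Q) (K : set A) (C : F) :=
  forall x, K x -> exists2 x', K x' /\ q x' = q x & `|x'| <= C * `|q x|.

Lemma closed_image_bounded_lifts (R : realType) (A : completeNormedModType R[i])
    (Q : normedModType R[i]) (q : A -> Q) (K : set A) (C : R[i]) :
  linear q -> (forall a, `|q a| <= `|a|) -> subspace K -> closed K -> 0 <= C ->
  has_bounded_lifts q K C -> closed (q @` K).
Proof.
move=> qlin q_le sK Kcl C0 lifts w clKw.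
have qB := zmod_morphism_linear qlin.
have qD a b : q (a + b) = q a + q b by have := qlin 1 a b; rewrite !scale1r.
pose r n := (2^-1 : R[i]) ^+ n.
have /choice[x /all_and2[Kx wx]] : forall n, exists x, K x /\ `|w - q x| < r n.
  move=> n; have [_ [[x Kx <-]]] := clKw _ (nbhsx_ballx w _ (halfpow_gt0 R n)).
  by rewrite -ball_normE; exists x.
have /choice[d /all_and3[Kd qd dC]] : forall n, exists d, [/\ K d,
    q d = q (x n.+1 - x n) & `|d| <= C * `|q (x n.+1 - x n)|].
  move=> n; have [d [Kd qd] dC] := lifts _ (subspaceB sK (Kx n.+1) (Kx n)).
  by exists d.
pose fix z n := if n is m.+1 then z m + d m else x 0%N.
have Kz n : K (z n) by elim: n => [|n IH] //=; exact: subspaceD.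
have qz n : q (z n) = q (x n).
  by elim: n => [|n IH] //=; rewrite qD IH qd qB addrC subrK.
have zC n : `|z n.+1 - z n| <= 2 * C * r n.
  rewrite /= addrAC subrr add0r; apply: le_trans (dC n) _; rewrite -mulrA mulrCA.
  apply: ler_wpM2l => //; rewrite qB.
  have -> : q (x n.+1) - q (x n) = (w - q (x n)) - (w - q (x n.+1)).
    by rewrite opprB [RHS]addrC subrKA.
  apply: le_trans (ler_normB _ _) _.
  apply: le_trans (lerD (ltW (wx n)) (ltW (wx n.+1))) _.
  by rewrite /r halfpowS mulr_natl mulr2n lerD2l ler_pdivrMr // ler_peMr ?lerDl.
have zcvg : cvg (z @ \oo) by apply: cvg_halfpow_steps zC; rewrite mulr_ge0.
exists (lim (z @ \oo)); first by apply: (closed_cvg _ Kcl _ _ zcvg); apply: nearW.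
apply/eqP; rewrite eq_sym -subr_eq0; apply/eqP.
apply: (@eq0_of_norm_le_eps _ _ _ 2) => // eps eps0.
have [N1 _ zl] := (cvgrPdist_lt _ _).1 zcvg eps eps0.
have [N2 rN] := halfpow_small eps0.
pose n := maxn N1 N2.
have -> : w - q (lim (z @ \oo)) = (w - q (x n)) + q (z n - lim (z @ \oo)).
  by rewrite qB qz addrA subrK.
apply: le_trans (ler_normD _ _) _; rewrite mulr2n mulrDl mul1r; apply: lerD.
  by apply: ltW; apply: lt_trans (wx n) (rN _ (leq_maxr _ _)).
by apply: le_trans (q_le _) _; rewrite distrC; exact/ltW/zl/leq_maxl.
Qed.

(** * Derivations into duals of ideals *)

Section Derivations.
Variables (R : realType) (A : completeNormedModType R[i]) (mul : A -> A -> A).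
Implicit Types (S K I : set A) (a b x y : A) (g : A -> R[i]) (D : A -> A -> R[i]).

Lemma closed_ideal_subspace S K : closed_ideal_in mul S K -> subspace K.
Proof. by case. Qed.

Lemma closed_idealMl K a x : closed_ideal mul K -> K x -> K (mul a x).
Proof. by move=> [_ _ _ Kid] Kx; case: (Kid a x Logic.I Kx). Qed.

Lemma closed_idealMr K a x : closed_ideal mul K -> K x -> K (mul x a).
Proof. by move=> [_ _ _ Kid] Kx; case: (Kid a x Logic.I Kx). Qed.

Lemma closed_ideal_inI S K I : closed_ideal_in mul S K -> closed_ideal_in mul S I ->
  closed_ideal_in mul I (K `&` I).
Proof.
move=> [_ sK Kcl Kid] [IS sI Icl Iid]; split=> [x []//| | |a x Ia [Kx Ix]].
- exact: subspaceI.
- exact: closedI.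
have [KaX KXa] := Kid a x (IS a Ia) Kx.
by have [IaX IXa] := Iid a x (IS a Ia) Ix.
Qed.

Definition ad g a x := g (mul x a) - g (mul a x).

Lemma derivation_into_dualS S S' K K' D : S' `<=` S -> K' `<=` K ->
  derivation_into_dual mul S K D -> derivation_into_dual mul S' K' D.
Proof.
move=> S'S K'K [Ddual Dlin [C DC] Dder]; split.
- by move=> a /S'S Sa; exact: dual_eltS (Ddual a Sa).
- by move=> k a b x /S'S Sa /S'S Sb /K'K Kx; exact: Dlin.
- by exists C => a x /S'S Sa /K'K Kx; exact: DC.
- by move=> a b x /S'S Sa /S'S Sb /K'K Kx; exact: Dder.
Qed.

Lemma derivation_bound S K D : derivation_into_dual mul S K D ->
  exists2 C, 0 <= C & forall a x, S a -> K x -> `|D a x| <= C * (`|a| * `|x|).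
Proof.
move=> [_ _ [C DC] _]; exists `|C| => [|a x Sa Kx]; first exact: normr_ge0.
by apply: norm_le_abs; rewrite ?mulr_ge0 // mulrA; exact: DC.
Qed.

Lemma derivationBl S K D a b x : derivation_into_dual mul S K D ->
  S a -> S b -> K x -> D (a - b) x = D a x - D b x.
Proof.
by move=> [_ Dlin _ _] Sa Sb Kx; rewrite -scaleN1r addrC Dlin // mulN1r addrC.
Qed.

Lemma derivationBr S K D a x y : derivation_into_dual mul S K D ->
  S a -> K x -> K y -> D a (x - y) = D a x - D a y.
Proof. by move=> [Ddual _ _ _] Sa; exact: dual_eltB (Ddual a Sa). Qed.

Lemma derivationM K D a b x : derivation_into_dual mul setT K D -> K x ->
  D (mul a b) x = D b (mul x a) + D a (mul b x).
Proof. by move=> [_ _ _ Dder] Kx; exact: Dder. Qed.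

Lemma derivation_ad S K g : is_banach_algebra mul -> closed_ideal_in mul S K ->
  dual_elt K g -> derivation_into_dual mul S K (ad g).
Proof.
move=> [massoc mullin mulrlin mulC] [_ _ _ Kid] gK.
have [Cg Cg0 gC] := dual_elt_bound gK.
have KaX a x : S a -> K x -> K (mul a x) by move=> Sa Kx; case: (Kid a x Sa Kx).
have KXa a x : S a -> K x -> K (mul x a) by move=> Sa Kx; case: (Kid a x Sa Kx).
have adC a x : S a -> K x -> `|ad g a x| <= (Cg + Cg) * (`|a| * `|x|).
  move=> Sa Kx; rewrite mulrDl; apply: le_trans (ler_normB _ _) _; apply: lerD.
    apply: le_trans (gC _ (KXa _ _ Sa Kx)) _.
    by rewrite ler_wpM2l // mulrC; exact: mulC.
  by apply: le_trans (gC _ (KaX _ _ Sa Kx)) _; rewrite ler_wpM2l.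
split.
- move=> a Sa; split=> [k x y Kx Ky|]; last first.
    by exists ((Cg + Cg) * `|a|) => x Kx; rewrite -mulrA; exact: adC.
  by rewrite /ad mullin mulrlin !gK.1; try (by [exact: KaX | exact: KXa]); ring.
- move=> k a b x Sa Sb Kx.
  by rewrite /ad mullin mulrlin !gK.1; try (by [exact: KaX | exact: KXa]); ring.
- by exists (Cg + Cg) => a x Sa Kx; rewrite -mulrA; exact: adC.
- by move=> a b x _ _ _; rewrite /ad !massoc; ring.
Qed.

Lemma derivationB S K D1 D2 : derivation_into_dual mul S K D1 ->
  derivation_into_dual mul S K D2 ->
  derivation_into_dual mul S K (fun a x => D1 a x - D2 a x).
Proof.
move=> dD1 dD2; have [C1 C10 D1C] := derivation_bound dD1.
have [C2 C20 D2C] := derivation_bound dD2.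
case: dD1 dD2 => [D1dual D1lin _ D1der] [D2dual D2lin _ D2der].
have DC a x : S a -> K x -> `|D1 a x - D2 a x| <= (C1 + C2) * (`|a| * `|x|).
  move=> Sa Kx; rewrite mulrDl; apply: le_trans (ler_normB _ _) _.
  by apply: lerD; [exact: D1C | exact: D2C].
split.
- move=> a Sa; split=> [k x y Kx Ky|]; last first.
    by exists ((C1 + C2) * `|a|) => x Kx; rewrite -mulrA; exact: DC.
  by rewrite (D1dual a Sa).1 // (D2dual a Sa).1 //; ring.
- by move=> k a b x Sa Sb Kx; rewrite D1lin // D2lin //; ring.
- by exists (C1 + C2) => a x Sa Kx; rewrite -mulrA; exact: DC.
- by move=> a b x Sa Sb Kx; rewrite D1der // D2der //; ring.
Qed.

Lemma inner_derivation_sub_ad S K D g : dual_elt K g ->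
  inner_derivation mul S K (fun a x => D a x - ad g a x) -> inner_derivation mul S K D.
Proof.
move=> gK [h [hK Dh]]; exists (fun x => h x + g x); split; first exact: dual_eltD.
by move=> a x Sa Kx; rewrite -[D a x](subrK (ad g a x)) Dh // /ad; ring.
Qed.

End Derivations.

(** * Bounded approximate identities *)

Section ApproximateIdentity.
Variables (R : realType) (A : completeNormedModType R[i]) (mul : A -> A -> A).

Definition bounded_left_approx (I : set A) (M : R[i]) :=
  forall x, I x -> forall eps, 0 < eps ->
  exists e, [/\ I e, `|e| <= M & `|mul e x - x| < eps].

Lemma bai_left_approx I : has_bai mul I -> exists2 M, 0 <= M & bounded_left_approx I M.
Proof.
move=> [L [le [e [[[l0] le_refl] _ Ie [M eM] e_approx]]]].
exists M => [|x Ix eps eps0]; first exact: le_trans (normr_ge0 _) (eM l0).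
have [l el] := e_approx x Ix eps eps0.
by exists (e l); split=> //; case: (el l (le_refl l)).
Qed.

Variables (I K : set A) (M : R[i]) (D : A -> A -> R[i]).
Hypotheses (idI : closed_ideal mul I) (approxI : bounded_left_approx I M).
Hypotheses (idK : closed_ideal mul K) (dD : derivation_into_dual mul setT K D).

Lemma derivation_vanish_left :
  (forall a x, I a -> K x -> I x -> D a x = 0) -> forall a x, I a -> K x -> D a x = 0.
Proof.
move=> DII a x Ia Kx; have [C C0 DC] := derivation_bound dD.
apply: (@eq0_of_norm_le_eps _ _ _ (C * `|x|)) => [|eps eps0]; first by rewrite mulr_ge0.
have [e [Ie _ ea]] := approxI Ia eps0.
have Dea : D (mul e a) x = 0.
  have [Kax Iax] := (closed_idealMl a idK Kx, closed_idealMr x idI Ia).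
  have [Kxe Ixe] := (closed_idealMr e idK Kx, closed_idealMl x idI Ie).
  by rewrite (derivationM _ _ dD Kx) !DII ?addr0.
rewrite -[D a x]subr0 -Dea -(derivationBl dD) //.
apply: le_trans (DC _ _ _ Kx) _ => //; rewrite -mulrA ler_wpM2l // mulrC.
by rewrite ler_wpM2l // distrC ltW.
Qed.

Lemma derivation_vanish_right :
  (forall a x, I a -> K x -> D a x = 0) -> forall a x, K x -> I x -> D a x = 0.
Proof.
move=> DI a x Kx Ix; have [C C0 DC] := derivation_bound dD.
apply: (@eq0_of_norm_le_eps _ _ _ (C * `|a|)) => [|eps eps0]; first by rewrite mulr_ge0.
have [e [Ie _ ex]] := approxI Ix eps0.
have Kex : K (mul e x) := closed_idealMl e idK Kx.
have Dex : D a (mul e x) = 0.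
  have [Iae Kxa] := (closed_idealMl a idI Ie, closed_idealMr a idK Kx).
  by have := derivationM a e dD Kx; rewrite (DI (mul a e)) // (DI e) // add0r.
have Kxex : K (x - mul e x) := subspaceB (closed_ideal_subspace idK) Kx Kex.
rewrite -[D a x]subr0 -Dex -(derivationBr dD) //.
apply: le_trans (DC _ _ _ Kxex) _ => //.
by rewrite -mulrA ler_wpM2l // ler_wpM2l // distrC ltW.
Qed.

End ApproximateIdentity.

(** * Quotient algebras *)

Section QuotientAlgebra.
Variables (R : realType) (A Q : completeNormedModType R[i]).
Variables (mulA : A -> A -> A) (mulQ : Q -> Q -> Q) (I : set A) (q : A -> Q).
Hypothesis quo : is_quotient_algebra mulA I mulQ q.
Implicit Types (a b x y : A).

Let qlin : linear q. Proof. by case: quo. Qed.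

Lemma quotientB a b : q (a - b) = q a - q b.
Proof. exact: (zmod_morphism_linear qlin). Qed.

Lemma quotientD a b : q (a + b) = q a + q b.
Proof. by rewrite -[a]scale1r qlin !scale1r. Qed.

Lemma quotient0 : q 0 = 0.
Proof. by rewrite -(subrr 0) quotientB subrr. Qed.

Lemma quotientM a b : q (mulA a b) = mulQ (q a) (q b).
Proof. by case: quo. Qed.

Lemma quotient_eq0 a : q a = 0 <-> I a.
Proof. by case: quo => _ _ _ qker _; exact: qker. Qed.

Lemma quotient_norm_le a : `|q a| <= `|a|.
Proof.
case: quo => _ _ _ _ /(_ a)[+ _] => /(_ 0); rewrite addr0; apply.
exact/quotient_eq0/quotient0.
Qed.

Lemma quotient_small_lift a : exists2 y, I y & `|a + y| <= 2 * `|q a|.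
Proof.
have [qa0|qa_neq0] := eqVneq (q a) 0.
  exists (- a); last by rewrite subrr normr0 mulr_ge0.
  by apply/quotient_eq0; rewrite -sub0r quotientB qa0 quotient0 subrr.
have qa_gt0 : 0 < `|q a| by rewrite normr_gt0.
case: quo => _ _ _ _ /(_ a)[_ /(_ _ qa_gt0)[y [Iy ay]]].
by exists y => //; rewrite mulr2n mulrDl mul1r ltW.
Qed.

(* [x] lifts to [x - e x], where [e] is a left approximate unit for an element
   [y] of [I] such that [x + y] is short. *)
Lemma bounded_left_approx_lifts (K : set A) (M : R[i]) :
  is_banach_algebra mulA -> closed_ideal mulA I -> closed_ideal mulA K ->
  0 <= M -> bounded_left_approx mulA I M -> has_bounded_lifts q K (3 + 2 * M).
Proof.
move=> bam idI idK M0 approxI x Kx; have sK := closed_ideal_subspace idK.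
have [qx0|qx_neq0] := eqVneq (q x) 0.
  exists 0; last by rewrite qx0 !normr0 mulr0.
  by split; [exact: sK.1 | rewrite quotient0 qx0].
have [y Iy xy] := quotient_small_lift x.
have qx_gt0 : 0 < `|q x| by rewrite normr_gt0.
have [e [Ie eM ey]] := approxI _ Iy _ qx_gt0.
exists (x - mulA e x).
  split; first exact: subspaceB sK Kx (closed_idealMl e idK Kx).
  by rewrite quotientB (proj2 (quotient_eq0 _) (closed_idealMr x idI Ie)) subr0.
have -> : x - mulA e x = (x + y) - mulA e (x + y) + (mulA e y - y).
  have [_ _ mulrlin _] := bam.
  have -> : mulA e (x + y) = mulA e x + mulA e y.
    by rewrite -[x]scale1r mulrlin !scale1r.
  by rewrite opprD !addrA subrK addrAC addrK.
have exy : `|mulA e (x + y)| <= M * (2 * `|q x|).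
  have [_ _ _ mulC] := bam; apply: le_trans (mulC _ _) _.
  by apply: ler_pM => //; exact: normr_ge0.
apply: le_trans (ler_normD _ _) _.
apply: le_trans (lerD (le_trans (ler_normB _ _) (lerD xy exy)) (ltW ey)) _.
by have -> : (3 + 2 * M) * `|q x| = 2 * `|q x| + M * (2 * `|q x|) + `|q x| by ring.
Qed.

Section InducedDerivation.
Variables (K : set A) (D : A -> A -> R[i]) (C : R[i]).
Hypotheses (idK : closed_ideal mulA K) (C0 : 0 <= C) (liftsK : has_bounded_lifts q K C).
Hypothesis dD : derivation_into_dual mulA setT K D.
Hypotheses (DI : forall a x, I a -> K x -> D a x = 0)
           (DKI : forall a x, K x -> I x -> D a x = 0).

Let sK := closed_ideal_subspace idK.

Lemma closed_ideal_quotient_image : closed_ideal mulQ (q @` K).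
Proof.
case: (sK) => K0 Klin; split=> //.
- split=> [|k _ _ [x Kx <-] [y Ky <-]]; first by exists 0 => //; exact: quotient0.
  by exists (k *: x + y); [exact: Klin | rewrite qlin].
- apply: closed_image_bounded_lifts liftsK => //; first exact: quotient_norm_le.
  by case: idK.
- move=> u _ _ [x Kx <-]; case: quo => _ _ qsurj _ _; have [a <-] := qsurj u.
  rewrite -!quotientM; split; [exists (mulA a x) | exists (mulA x a)] => //.
    exact: (closed_idealMl a idK Kx).
  exact: (closed_idealMr a idK Kx).
Qed.

Lemma derivation_quotient_congr a b x y : K x -> K y -> q a = q b -> q x = q y ->
  D a x = D b y.
Proof.
move=> Kx Ky qab qxy.
have Iab : I (a - b) by apply/quotient_eq0; rewrite quotientB qab subrr.
have Ixy : I (x - y) by apply/quotient_eq0; rewrite quotientB qxy subrr.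
rewrite -[D a x](subrK (D b x)) -(derivationBl dD) // DI // add0r.
rewrite -[D b x](subrK (D b y)) -(derivationBr dD) // DKI ?add0r //.
exact: subspaceB sK Kx Ky.
Qed.

(* The derivation of [A / I] into the dual of [q K] induced by [D], defined
   through chosen preimages; by [derivation_quotient_congr] the choice does not
   matter. *)
Let pre u := xget 0 [set a | q a = u].
Let preK v := xget 0 [set x | K x /\ q x = v].
Let DQ u v := D (pre u) (preK v).

Let DQ_q a x : K x -> DQ (q a) (q x) = D a x.
Proof.
move=> Kx; have [Kx' qx'] : K (preK (q x)) /\ q (preK (q x)) = q x.
  by apply: (xgetPex 0 (P := [set y | K y /\ q y = q x])); exists x.
apply: derivation_quotient_congr => //.
by apply: (xgetPex 0 (P := [set b | q b = q a])); exists a.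
Qed.

Let DQ_bound : exists2 CQ, 0 <= CQ &
  forall u v, (q @` K) v -> `|DQ u v| <= CQ * `|u| * `|v|.
Proof.
have [CD CD0 DC] := derivation_bound dD.
exists (CD * 2 * C) => [|u _ [x0 Kx0 <-]]; first by rewrite !mulr_ge0.
have [x [Kx qx] xC] := liftsK Kx0.
case: quo => _ _ /(_ u)[a <-] _ _.
have [y Iy ay] := quotient_small_lift a.
have qay : q (a + y) = q a by rewrite quotientD (proj2 (quotient_eq0 _) Iy) addr0.
rewrite -qx DQ_q // (derivation_quotient_congr (b := a + y) (y := x)) //.
apply: le_trans (DC _ _ _ Kx) _ => //.
have -> : CD * 2 * C * `|q a| * `|q x| = CD * ((2 * `|q a|) * (C * `|q x|)) by ring.
by rewrite ler_wpM2l // ler_pM // qx.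
Qed.

Let derivation_DQ : derivation_into_dual mulQ setT (q @` K) DQ.
Proof.
have [CQ CQ0 DQC] := DQ_bound.
case: quo => _ _ qsurj _ _; case: dD => Ddual Dlin _ _.
split.
- move=> u _; split=> [k _ _ [x Kx <-] [y Ky <-]|]; last first.
    by exists (CQ * `|u|) => v Kv; exact: DQC.
  have [a <-] := qsurj u.
  by rewrite -qlin !DQ_q //; [exact: (Ddual a Logic.I).1 | exact: sK.2].
- move=> k u1 u2 _ _ _ [x Kx <-].
  have [a1 <-] := qsurj u1; have [a2 <-] := qsurj u2.
  by rewrite -qlin !DQ_q // Dlin.
- by exists CQ => u v _; exact: DQC.
- move=> u1 u2 _ _ _ [x Kx <-].
  have [a1 <-] := qsurj u1; have [a2 <-] := qsurj u2.
  rewrite -!quotientM !DQ_q ?(derivationM _ _ dD) //.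
    exact: (closed_idealMl _ idK Kx).
  exact: (closed_idealMr _ idK Kx).
Qed.

Lemma derivation_quotient_inner :
  ideally_amenable mulQ -> inner_derivation mulA setT K D.
Proof.
move=> amQ; have [h [hK Dh]] := amQ _ closed_ideal_quotient_image DQ derivation_DQ.
have [Ch Ch0 hC] := dual_elt_bound hK.
exists (fun x => h (q x)); split.
  split=> [k x y Kx Ky|]; first by rewrite qlin hK.1.
  exists Ch => x Kx; apply: le_trans (hC _ _) _; first by exists x.
  by rewrite ler_wpM2l // quotient_norm_le.
by move=> a x _ Kx; rewrite -DQ_q // Dh // ?quotientM //; exists x.
Qed.

End InducedDerivation.
End QuotientAlgebra.

Theorem theorem5p4 (R : realType)
    (A : completeNormedModType R[i]) (mulA : A -> A -> A)
    (I : set A)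
    (Q : completeNormedModType R[i]) (mulQ : Q -> Q -> Q) (q : A -> Q) :
  is_banach_algebra mulA ->
  closed_ideal mulA I ->
  has_bai mulA I ->
  is_banach_algebra mulQ ->
  is_quotient_algebra mulA I mulQ q ->
  ideally_amenable_on mulA I ->
  ideally_amenable mulQ ->
  ideally_amenable mulA.
Proof.
move=> bam idI /bai_left_approx[M M0 approxI] _ quo amI amQ K idK D dD.
have idKI := closed_ideal_inI idK idI.
have dD_I := derivation_into_dualS (subsetT I) (@subIsetl _ K I) dD.
have [f [fKI Df]] := amI _ idKI D dD_I.
have [g [gA gf]] := dual_elt_extension (closed_ideal_subspace idKI) fKI.
have gK := dual_eltS (subsetT K) gA.
pose D' a x := D a x - ad mulA g a x.
have dD' : derivation_into_dual mulA setT K D' :=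
  derivationB dD (derivation_ad bam idK gK).
have D'I : forall a x, I a -> K x -> D' a x = 0.
  apply: (derivation_vanish_left idI approxI idK dD') => a x Ia Kx Ix.
  have [_ _ _ /(_ a x Ia (conj Kx Ix))[KIax KIxa]] := idKI.
  by rewrite /D' Df // /ad !gf ?subrr.
have D'KI := derivation_vanish_right idI approxI idK dD' D'I.
have liftsK := bounded_left_approx_lifts quo bam idI idK M0 approxI.
have C0 : 0 <= 3 + 2 * M by rewrite addr_ge0 ?mulr_ge0.
apply: inner_derivation_sub_ad gK _.
exact: (derivation_quotient_inner quo idK C0 liftsK dD' D'I D'KI amQ).
Qed.
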